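(* Let $X$ be a $T_1$ topological space and regard $X\subseteq\beta_\circ^F X$ via $x\mapsto\mathcal{U}_x=\{Z\in Z[C_c(X)_F]: x\in Z\}$. Then every maximal ideal $M$ of $C_c(X)_F$ is of the form $M^p=\{f\in C_c(X)_F: p\in \mathrm{Cl}_{\beta_\circ^F X}Z(f)\}$ for some $p\in\beta_\circ^F X$ (namely $p=Z[M]$).
   Context: $C_c(X)_F$ denotes the set of all functions $f:X\to\mathbb{R}$ whose range is countable and whose set of points of discontinuity is finite. $Z(f)=\{x:f(x)=0\}$, $Z[M]=\{Z(f):f\in M\}$, $Z[C_c(X)_F]=\{Z(f):f\in C_c(X)_F\}$. A $(\mathcal{Z}_c)_F$-filter on $X$ is a nonempty family $\mathcal{F}\subseteq Z[C_c(X)_F]$ with $\emptyset\notin\mathcal{F}$, closed under finite intersections and upward closed within $Z[C_c(X)_F]$; a $(\mathcal{Z}_c)_F$-ultrafilter is a maximal one. $\beta_\circ^F X$ is the set of all $(\mathcal{Z}_c)_F$-ultrafilters on $X$ with the topology having as base for closed sets the sets $\overline{Z}=\{\mathcal{U}: Z\in\mathcal{U}\}$, $Z\in Z[C_c(X)_F]$. For $Z\subseteq X$ (identified with a subset of $\beta_\circ^F X$), $\mathrm{Cl}_{\beta_\circ^F X}Z$ is its closure there. *)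

From HB Require Import structures.
From mathcomp Require Import all_boot all_order all_algebra.
From mathcomp Require Import all_classical all_reals all_analysis.
Set Implicit Arguments. Unset Strict Implicit. Unset Printing Implicit Defensive.
Import Order.TTheory GRing.Theory Num.Theory.
Import numFieldNormedType.Exports.
Local Open Scope classical_set_scope.
Local Open Scope ring_scope.

Section CcF.
Variables (X : topologicalType) (R : realType).

Definition CcF (f : X -> R) : Prop :=
  countable (range f) /\ finite_set [set x : X | ~ {for x, continuous f}].

Definition Zset (f : X -> R) : set X := [set x | f x = 0].

Definition ZCcF : set (set X) := [set Z | exists f, CcF f /\ Z = Zset f].

Definition ZcF_filter (F : set (set X)) : Prop :=
  [/\ F !=set0, F `<=` ZCcF, ~ F set0,
      (forall A B, F A -> F B -> F (A `&` B)) &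
      (forall A B, F A -> ZCcF B -> A `<=` B -> F B)].

Definition ZcF_ultrafilter (F : set (set X)) : Prop :=
  ZcF_filter F /\ (forall G, ZcF_filter G -> F `<=` G -> G = F).

Definition betaF : set (set (set X)) := [set U | ZcF_ultrafilter U].

Definition basic_closed (Z : set X) : set (set (set X)) :=
  [set U | betaF U /\ U Z].

Definition betaF_closed (C : set (set (set X))) : Prop :=
  exists B : set (set X), B `<=` ZCcF /\
    C = [set U | betaF U /\ forall Z, B Z -> basic_closed Z U].

Definition betaF_closure (S : set (set (set X))) : set (set (set X)) :=
  [set p | forall C, betaF_closed C -> S `<=` C -> C p].

Definition U_pt (x : X) : set (set X) := [set Z | ZCcF Z /\ Z x].

(* a subset Z of X identified with a subset of beta_o^F X *)
Definition embed (Z : set X) : set (set (set X)) := U_pt @` Z.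

Definition CcF_ideal (M : set (X -> R)) : Prop :=
  [/\ M `<=` CcF, M (fun _ => 0),
      (forall f g, M f -> M g -> M (f \- g)) &
      (forall f g, CcF f -> M g -> M (f \* g))].

Definition CcF_maximal_ideal (M : set (X -> R)) : Prop :=
  [/\ CcF_ideal M, ~ M (fun _ => 1) &
      forall N, CcF_ideal N -> ~ N (fun _ => 1) -> M `<=` N -> N = M].

Definition Zimage (M : set (X -> R)) : set (set X) := Zset @` M.

Definition Mp (p : set (set X)) : set (X -> R) :=
  [set f | CcF f /\ betaF_closure (embed (Zset f)) p].

End CcF.

(* Z[M] is a (Z_c)_F-filter for every proper ideal M (intersections come from
   f^2 + g^2, and a function without zeros is invertible in C_c(X)_F), while
   every (Z_c)_F-filter G yields the proper ideal {f | Z(f) in G}.  Maximality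
   of M therefore makes Z[M] an ultrafilter p with M = {f | Z(f) in p}.  In a
   T_1 space points are zero-sets, so each U_x is an ultrafilter; hence the
   closure of a zero-set Z in beta_o^F X is the basic closed set of Z, and
   p lies in the closure of Z(f) exactly when Z(f) belongs to p. *)
From mathcomp Require Import all_boot all_order all_algebra.
From mathcomp Require Import all_classical all_reals all_analysis.
Set Implicit Arguments.
Import Order.TTheory GRing.Theory Num.Theory.
Import numFieldNormedType.Exports.
Local Open Scope ring_scope.
Local Open Scope classical_set_scope.

Section CcF_ring.
Variables (X : topologicalType) (R : realType).
Implicit Types f g : X -> R.

Lemma CcF_map2 (op : R -> R -> R) f g :
  CcF f -> CcF g ->
  (forall x, {for x, continuous f} -> {for x, continuous g} ->
     {for x, continuous (fun y => op (f y) (g y))}) ->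
  CcF (fun y => op (f y) (g y)).
Proof.
move=> [cf ff] [cg fg] op_cont; split.
  apply: (sub_countable (B := range f `*` range g)); last exact: countableX.
  apply: card_le_trans; last exact: (card_image_le (fun p => op p.1 p.2)).
  apply: subset_card_le => _ [x _ <-].
  by exists (f x, g x) => //; split; exists x.
apply: (sub_finite_set (B := [set x | ~ {for x, continuous f}] `|`
                              [set x | ~ {for x, continuous g}])).
  move=> x /= ncont.
  have [cfx|] := pselect {for x, continuous f}; last by left.
  have [cgx|] := pselect {for x, continuous g}; last by right.
  by case: ncont; exact: op_cont.
by rewrite finite_setU.
Qed.

Lemma CcF_cst (c : R) : CcF (fun _ : X => c).
Proof.
split.
  apply: finite_set_countable; apply: (sub_finite_set (B := [set c])).
    by move=> _ [x _ <-].
  exact: finite_set1.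
apply: (sub_finite_set (B := set0)); last exact: finite_set0.
by move=> x /= ncont; apply: ncont; exact: cvg_cst.
Qed.

Lemma CcF_sub f g : CcF f -> CcF g -> CcF (f \- g).
Proof. by move=> cf cg; apply: (CcF_map2 (fun a b => a - b)) => // x; apply: cvgB. Qed.

Lemma CcF_add f g : CcF f -> CcF g -> CcF (f \+ g).
Proof. by move=> cf cg; apply: (CcF_map2 (fun a b => a + b)) => // x; apply: cvgD. Qed.

Lemma CcF_mul f g : CcF f -> CcF g -> CcF (f \* g).
Proof. by move=> cf cg; apply: (CcF_map2 (fun a b => a * b)) => // x; apply: cvgM. Qed.

Lemma CcF_inv f : CcF f -> (forall x, f x != 0) -> CcF (fun x => (f x)^-1).
Proof.
move=> [cf ff] f_neq0; split.
  apply: (sub_countable (B := range f)) => //.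
  apply: card_le_trans; last exact: (card_image_le (fun a => a^-1)).
  by apply: subset_card_le => _ [x _ <-]; exists (f x) => //; exists x.
apply: (sub_finite_set (B := [set x | ~ {for x, continuous f}])) => //.
by move=> x /= ncont cfx; apply: ncont; exact: cvgV.
Qed.

Lemma ZsetM f g : Zset (f \* g) = Zset f `|` Zset g.
Proof.
apply/seteqP; split=> x; rewrite /Zset /=; last by case=> ->; rewrite ?mul0r ?mulr0.
by move/eqP; rewrite mulf_eq0 => /orP[]/eqP; [left|right].
Qed.

Lemma Zset_sum_sq f g : Zset (f \* f \+ g \* g) = Zset f `&` Zset g.
Proof.
apply/seteqP; split=> x; rewrite /Zset /=; last by case=> -> ->; rewrite mulr0 addr0.
move/eqP; rewrite -!expr2 paddr_eq0 ?sqr_ge0 // !sqrf_eq0.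
by case/andP => /eqP -> /eqP ->.
Qed.

Lemma ZCcF_Zset f : CcF f -> ZCcF R (Zset f).
Proof. by exists f. Qed.

Lemma ZCcFT : ZCcF R [set: X].
Proof. by exists (fun _ => 0); split; [exact: CcF_cst | apply/seteqP]. Qed.

Lemma ZCcFI (A B : set X) : ZCcF R A -> ZCcF R B -> ZCcF R (A `&` B).
Proof.
move=> [f [cf ->]] [g [cg ->]]; rewrite -Zset_sum_sq.
by apply: ZCcF_Zset; apply: CcF_add; apply: CcF_mul.
Qed.

Lemma ZCcF1 : accessible_space X -> forall x : X, ZCcF R [set x].
Proof.
move=> T1 x; set f := fun y => if y == x then 0 else 1 : R.
have -> : [set x] = Zset f.
  apply/seteqP; split=> y; rewrite /Zset /f /=; first by move=> ->; rewrite eqxx.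
  by case: eqP => // _ /eqP; rewrite oner_eq0.
apply: ZCcF_Zset; split.
  apply: finite_set_countable; apply: (sub_finite_set (B := [set 0; 1])).
    by move=> _ [y _ <-]; rewrite /f; case: (y == x); [left|right].
  exact: finite_set2.
apply: (sub_finite_set (B := [set x])); last exact: finite_set1.
move=> y /= ncont; apply: contrapT => yx; apply: ncont.
apply: (near_cst_continuous (1 : R)).
have : nbhs y (~` [set x]).
  by apply: open_nbhs_nbhs; split; [exact/closed_openC/accessible_closed_set1|].
by apply: filterS => z /eqP /negbTE; rewrite /f => ->.
Qed.

Lemma CcF_idealD (M : set (X -> R)) f g :
  CcF_ideal M -> M f -> M g -> M (f \+ g).
Proof.
move=> [_ M0 MB _] Mf Mg.
have -> : f \+ g = f \- ((fun _ => 0) \- g) by apply: funext => x /=; rewrite sub0r opprK.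
by apply: (MB) => //; exact: (MB).
Qed.

End CcF_ring.

Section Filters_and_ideals.
Variables (X : topologicalType) (R : realType).
Implicit Types (f g : X -> R) (M : set (X -> R)) (G p : set (set X)).

Definition Zpreimage G : set (X -> R) := [set f | CcF f /\ G (Zset f)].

Lemma ZcF_filterT G : ZcF_filter R G -> G [set: X].
Proof. by case=> [[A GA] _ _ _ up]; apply: (up A) => //; exact: ZCcFT. Qed.

Lemma Zpreimage_ideal G : ZcF_filter R G -> CcF_ideal (Zpreimage G).
Proof.
move=> filtG; have [_ _ _ GI up] := filtG.
split.
- by move=> f [].
- split; first exact: CcF_cst.
  have -> : Zset (fun _ : X => 0 : R) = setT by apply/seteqP; split.
  exact: ZcF_filterT.
- move=> f g [cf Gf] [cg Gg]; split; first exact: CcF_sub.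
  apply: (up (Zset f `&` Zset g)); first exact: GI.
    by apply: ZCcF_Zset; exact: CcF_sub.
  by move=> y [fy gy]; rewrite /Zset /= fy gy subrr.
- move=> f g cf [cg Gg]; split; first exact: CcF_mul.
  apply: (up (Zset g)) => //; first by apply: ZCcF_Zset; exact: CcF_mul.
  by rewrite ZsetM; exact: subsetUr.
Qed.

Lemma Zpreimage_proper G : ZcF_filter R G -> ~ Zpreimage G (fun _ => 1).
Proof.
case=> _ _ G0 _ _ [_]; have -> // : Zset (fun _ : X => 1 : R) = set0.
by apply/seteqP; split => // y /= /eqP; rewrite oner_eq0.
Qed.

Lemma Zimage_filter M : CcF_ideal M -> ~ M (fun _ => 1) -> ZcF_filter R (Zimage M).
Proof.
move=> idealM M1; have [MC M0 _ MM] := idealM.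
split.
- by exists (Zset (fun _ : X => 0 : R)); exists (fun _ => 0).
- by move=> _ [f Mf <-]; apply: ZCcF_Zset; exact: (MC).
- move=> [f Mf Zf0]; apply: M1.
  have f_neq0 x : f x != 0 by apply/eqP => fx; have : set0 x by rewrite -Zf0.
  have -> : (fun _ : X => 1) = (fun x => (f x)^-1) \* f.
    by apply: funext => x /=; rewrite mulVf.
  by apply: (MM) => //; apply: CcF_inv => //; exact: (MC).
- move=> _ _ [f Mf <-] [g Mg <-]; exists (f \* f \+ g \* g); last exact: Zset_sum_sq.
  by apply: CcF_idealD => //; apply: (MM) => //; exact: (MC).
- move=> _ B [f Mf <-] [g [cg ->]] Zf_sub_Zg.
  exists (g \* f); first exact: MM.
  by rewrite ZsetM; apply/seteqP; split; [move=> x [] // /Zf_sub_Zg|left].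
Qed.

Lemma maximal_ideal_Zpreimage M G :
  CcF_maximal_ideal M -> ZcF_filter R G -> Zimage M `<=` G -> Zpreimage G = M.
Proof.
move=> [[MC _ _ _] _ Mmax] filtG sub.
apply: Mmax; [exact: Zpreimage_ideal | exact: Zpreimage_proper |].
by move=> f Mf; split; [exact: MC | apply: sub; exists f].
Qed.

Lemma maximal_ideal_Zimage_ultra M :
  CcF_maximal_ideal M -> ZcF_ultrafilter R (Zimage M).
Proof.
move=> maxM; have [idealM M1 _] := maxM.
split=> [|G filtG sub]; first exact: Zimage_filter.
apply/seteqP; split => // Z GZ.
have [_ GZcF _ _ _] := filtG; have [f [cf eZ]] := GZcF Z GZ.
have : Zpreimage G f by split => //; rewrite -eZ.
by rewrite (maximal_ideal_Zpreimage maxM filtG sub) => Mf; exists f.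
Qed.

Lemma U_pt_ultra : accessible_space X -> forall x : X, ZcF_ultrafilter R (U_pt R x).
Proof.
move=> T1 x; have filt : ZcF_filter R (U_pt R x).
  split.
  - by exists setT; split => //; exact: ZCcFT.
  - by move=> Z [].
  - by case.
  - by move=> A B [zA Ax] [zB Bx]; split; [exact: ZCcFI|].
  - by move=> A B [zA Ax] zB AB; split => //; exact: AB.
split => // G [_ GZcF G0 GI _] sub.
apply/seteqP; split => // Z GZ; split; first exact: GZcF.
apply: contrapT => nZx; apply: G0.
have -> : set0 = Z `&` [set x].
  by apply/seteqP; split => // y [Zy yx]; apply: nZx; rewrite -yx.
by apply: GI => //; apply: sub; split => //; exact: ZCcF1.
Qed.

Lemma basic_closed_closed (Z : set X) : ZCcF R Z -> betaF_closed R (basic_closed R Z).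
Proof.
move=> zZ; exists [set Z]; split; first by move=> _ ->.
apply/seteqP; split; first by move=> U [bU UZ]; split => // _ ->; split.
by move=> U [bU /(_ Z erefl) []].
Qed.

Lemma betaF_closure_embed p (Z : set X) : accessible_space X ->
  betaF R p -> ZCcF R Z -> betaF_closure R (embed R Z) p <-> p Z.
Proof.
move=> T1 bp zZ; split.
  move=> /(_ _ (basic_closed_closed zZ)) [] // _ [x Zx <-].
  by split; [exact: U_pt_ultra|split].
move=> pZ C [B [BZ ->]] embed_sub; split => // Z' BZ'; split => //.
have [[_ _ _ _ up] _] := bp; apply: (up Z) => //; first exact: BZ.
move=> x Zx; have [_ /(_ Z' BZ') [_ []]] := embed_sub _ (ex_intro2 _ _ x Zx erefl).
by [].
Qed.

Lemma Mp_Zpreimage p : accessible_space X -> betaF R p -> Mp p = Zpreimage p.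
Proof.
move=> T1 bp; apply/seteqP; split=> f [cf pf]; split => //.
  exact: (betaF_closure_embed T1 bp (ZCcF_Zset cf)).1.
exact: (betaF_closure_embed T1 bp (ZCcF_Zset cf)).2.
Qed.

End Filters_and_ideals.

Theorem theorem4p4 (X : topologicalType) (R : realType) :
  accessible_space X ->
  forall M : set (X -> R), CcF_maximal_ideal M ->
  exists p : set (set X),
    [/\ betaF R p, p = Zimage M & M = Mp p].
Proof.
move=> T1 M maxM; have ultra := maximal_ideal_Zimage_ultra maxM.
have [filt _] := ultra.
exists (Zimage M); split; [exact: ultra | by [] |].
by rewrite Mp_Zpreimage // (maximal_ideal_Zpreimage maxM filt (subset_refl _)).
Qed.
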